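(* Let $S,T$ be semirings, $G$ a $(T,S)$-bisemimodule, and let $0\to L\xrightarrow{f}M\xrightarrow{g}N$ be a sequence of left $T$-semimodules, with induced sequence of left $S$-semimodules $0\to\mathrm{Hom}_T(G,L)\xrightarrow{(G,f)}\mathrm{Hom}_T(G,M)\xrightarrow{(G,g)}\mathrm{Hom}_T(G,N)$, where $(G,f)(\varphi)=f\circ\varphi$ and $(G,g)(\psi)=g\circ\psi$. (1) If $0\to L\xrightarrow{f}M$ is exact (i.e. $f$ is injective) and $f$ is normal, then $0\to\mathrm{Hom}_T(G,L)\xrightarrow{(G,f)}\mathrm{Hom}_T(G,M)$ is exact (i.e. $(G,f)$ is injective) and $(G,f)$ is normal. (2) If $0\to L\xrightarrow{f}M\xrightarrow{g}N$ is semi-exact and $f$ is normal, then $0\to\mathrm{Hom}_T(G,L)\to\mathrm{Hom}_T(G,M)\to\mathrm{Hom}_T(G,N)$ is proper-exact (and hence semi-exact) and $(G,f)$ is normal. (3) If $0\to L\xrightarrow{f}M\xrightarrow{g}N$ is exact and $\mathrm{Hom}_T(G,-)$ preserves $k$-normal morphisms, then $0\to\mathrm{Hom}_T(G,L)\to\mathrm{Hom}_T(G,M)\to\mathrm{Hom}_T(G,N)$ is exact.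
   Context: A semiring $(S,+,0,\cdot,1)$ consists of a commutative monoid $(S,+,0)$ and a monoid $(S,\cdot,1)$ with $0\neq 1$, absorbing zero and both distributive laws; semimodules are as modules over rings without subtraction. $\mathrm{Hom}_T(G,X)$ is a left $S$-semimodule via pointwise addition and $(s\varphi)(x)=\varphi(xs)$. For a linear map $h:X\to Y$: $\mathrm{Ker}(h)=\{x\mid h(x)=0\}$; for $A\subseteq Y$, $\overline{A}=\{y\in Y\mid y+a=a'\text{ for some }a,a'\in A\}$; $h$ is $k$-normal if $h(x)=h(x')$ implies $x+k=x'+k'$ for some $k,k'\in\mathrm{Ker}(h)$; $h$ is $i$-normal if $h(X)=\overline{h(X)}$; $h$ is normal if both. A sequence $X\xrightarrow{u}Y\xrightarrow{v}Z$ is exact if $v$ is $k$-normal and $u(X)=\mathrm{Ker}(v)$; proper-exact if $u(X)=\mathrm{Ker}(v)$; semi-exact if $\overline{u(X)}=\mathrm{Ker}(v)$. A longer sequence is exact (resp. proper-exact, semi-exact) if each consecutive three-term piece is; a leading $0$ denotes the zero semimodule with the zero map. *)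

From HB Require Import structures.
From mathcomp Require Import all_boot all_order all_algebra.
Set Implicit Arguments. Unset Strict Implicit. Unset Printing Implicit Defensive.
Import GRing.Theory.
Local Open Scope ring_scope.

(* A commutative monoid presented by its carrier, zero and addition; used so that
   the notions below apply both to MathComp semimodules and to HomT-semimodules. *)
Record cmonoid := CMonoid { cm_car :> Type; cm_zero : cm_car;
                            cm_add : cm_car -> cm_car -> cm_car }.

Definition cm_of (V : nmodType) : cmonoid := @CMonoid V 0 +%R.

Section Notions.
Variables (X Y : cmonoid).
Definition Ker (h : X -> Y) (x : X) : Prop := h x = cm_zero Y.
Definition Im (h : X -> Y) (y : Y) : Prop := exists x, h x = y.
Definition cl (A : Y -> Prop) (y : Y) : Prop :=
  exists a a', A a /\ A a' /\ cm_add y a = a'.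
Definition k_normal (h : X -> Y) : Prop :=
  forall x x', h x = h x' ->
    exists k k', Ker h k /\ Ker h k' /\ cm_add x k = cm_add x' k'.
Definition i_normal (h : X -> Y) : Prop := forall y, Im h y <-> cl (Im h) y.
Definition normal (h : X -> Y) : Prop := k_normal h /\ i_normal h.
End Notions.

Section Exactness.
Variables (X Y Z : cmonoid).
Definition exact3 (u : X -> Y) (v : Y -> Z) : Prop :=
  k_normal v /\ forall y, Im u y <-> Ker v y.
Definition proper_exact3 (u : X -> Y) (v : Y -> Z) : Prop :=
  forall y, Im u y <-> Ker v y.
Definition semi_exact3 (u : X -> Y) (v : Y -> Z) : Prop :=
  forall y, cl (Im u) y <-> Ker v y.
End Exactness.

Definition cm_zero_obj : cmonoid := @CMonoid unit tt (fun _ _ => tt).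
Definition zmap (Y : cmonoid) : cm_zero_obj -> Y := fun _ => cm_zero Y.

Definition right_bisemimod (T S : nzSemiRingType) (G : lSemiModType T)
  (ract : G -> S -> G) : Prop :=
  (forall x y s, ract (x + y) s = ract x s + ract y s) /\
  (forall x s s', ract x (s + s') = ract x s + ract x s') /\
  (forall x s s', ract x (s * s') = ract (ract x s) s') /\
  (forall x, ract x 1 = x) /\
  (forall x, ract x 0 = 0) /\ (forall s, ract 0 s = 0) /\
  (forall (t : T) x s, ract (t *: x) s = t *: ract x s).

Definition is_Tlinear (T : nzSemiRingType) (G X : lSemiModType T) (phi : G -> X)
  : Prop :=
  [/\ phi 0 = 0, forall x y, phi (x + y) = phi x + phi y
    & forall (t : T) x, phi (t *: x) = t *: phi x].

Definition homT (T : nzSemiRingType) (G X : lSemiModType T) : Type :=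
  {phi : G -> X | is_Tlinear phi}.

Section HomOps.
Variables (T : nzSemiRingType) (G X : lSemiModType T).
Lemma hom0_lin : is_Tlinear (fun _ : G => (0 : X)).
Proof. by split=> [|x y|t x]; rewrite ?addr0 ?scaler0. Qed.
Definition hom0 : homT G X := exist _ _ hom0_lin.
Lemma homadd_lin (p q : homT G X) :
  is_Tlinear (fun x => proj1_sig p x + proj1_sig q x).
Proof.
case: p q => [p [p0 pD pZ]] [q [q0 qD qZ]] /=; split=> [|x y|t x].
- by rewrite p0 q0 addr0.
- by rewrite pD qD addrACA.
- by rewrite pZ qZ scalerDr.
Qed.
Definition homadd (p q : homT G X) : homT G X := exist _ _ (homadd_lin p q).
(* Hom_T(G,X) with pointwise addition (its left S-action plays no role in the
   additive notions Ker, closure, normality, exactness). *)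
Definition HomT : cmonoid := @CMonoid (homT G X) hom0 homadd.
End HomOps.

Section HomMap.
Variables (T : nzSemiRingType) (G X Y : lSemiModType T) (f : {linear X -> Y}).
Lemma homcomp_lin (p : homT G X) : is_Tlinear (fun x => f (proj1_sig p x)).
Proof.
case: p => [p [p0 pD pZ]] /=; split=> [|x y|t x].
- by rewrite p0 raddf0.
- by rewrite pD raddfD.
- by rewrite pZ linearZ.
Qed.
Definition HomMap : HomT G X -> HomT G Y := fun p => exist _ _ (homcomp_lin p).
End HomMap.
Arguments HomMap {T} G {X Y} f.
Arguments HomT {T} G X.

(* In each case Ker f = 0, which together with k-normality of f makes f
   injective. A T-linear psi : G -> M whose values all lie in Im f then factors
   as f \o phi, and phi is T-linear again because f is injective. So the image
   of (G,f) consists of the psi with values in Im f, the kernel of (G,g) of the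
   psi with values in Ker g, and the closure of the image of (G,f) contains
   only psi with values in the closure of Im f: exactness and normality
   transfer pointwise from the original sequence to the Hom sequence. *)
From mathcomp Require Import all_boot all_order all_algebra.
From Stdlib Require Import FunctionalExtensionality ProofIrrelevance ClassicalEpsilon.
Set Implicit Arguments. Unset Strict Implicit.
Import GRing.Theory.
Local Open Scope ring_scope.

Section CMonoidMaps.
Variables (X Y Z : cmonoid).

Lemma Im_zmap (x : X) : Im (zmap X) x -> x = cm_zero X.
Proof. by case=> ? <-. Qed.

Lemma injective_k_normal (h : X -> Y) (k0 : X) :
  injective h -> Ker h k0 -> k_normal h.
Proof. by move=> inj_h hk0 x x' /inj_h ->; exists k0, k0. Qed.

Lemma injective_exact_zmap (h : X -> Y) :
  injective h -> h (cm_zero X) = cm_zero Y -> exact3 (zmap X) h.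
Proof.
move=> inj_h h0; split; first exact: injective_k_normal h0.
move=> x; split; first by move/Im_zmap->.
by rewrite /Ker -h0 => /inj_h ->; exists tt.
Qed.

Lemma Im_sub_cl (h : X -> Y) (y : Y) :
  (forall y', cm_add y' (cm_zero Y) = y') -> Im h (cm_zero Y) ->
  Im h y -> cl (Im h) y.
Proof. by move=> addy0 Im0 Imy; exists (cm_zero Y), y; rewrite addy0. Qed.

Lemma i_normal_semi_exact (u : X -> Y) (v : Y -> Z) :
  i_normal u -> semi_exact3 u v -> proper_exact3 u v.
Proof. by move=> iu uv y; rewrite iu. Qed.

End CMonoidMaps.

Section ZeroKernel.
Variables (V W : nmodType) (h : cm_of V -> cm_of W).

Lemma k_normal_injective :
  k_normal h -> (forall v, Ker h v -> v = 0) -> injective h.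
Proof.
move=> kh ker0 x x' /kh [k [k' [/ker0 -> [/ker0 ->]]]].
by rewrite /= !addr0.
Qed.

Lemma exact_zmap_injective : exact3 (zmap (cm_of V)) h -> injective h.
Proof.
case=> kh ex; apply: k_normal_injective => // v /ex.
exact: Im_zmap.
Qed.

Lemma semi_exact_zmap_injective :
  semi_exact3 (zmap (cm_of V)) h -> k_normal h -> injective h.
Proof.
move=> ex kh; apply: k_normal_injective => // v /ex [a [a' [/Im_zmap-> [/Im_zmap->]]]].
by rewrite /= addr0.
Qed.

End ZeroKernel.

Section HomFunctor.
Variables (T : nzSemiRingType) (G : lSemiModType T).

Lemma homT_ext (X : lSemiModType T) (p q : homT G X) :
  (forall x, proj1_sig p x = proj1_sig q x) -> p = q.
Proof.
case: p q => [p p_lin] [q q_lin] /= /functional_extensionality pq.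
by subst q; rewrite (proof_irrelevance _ p_lin q_lin).
Qed.

Lemma homadd0 (X : lSemiModType T) (p : homT G X) : homadd p (hom0 G X) = p.
Proof. by apply: homT_ext => x /=; rewrite addr0. Qed.

Variables (L M N : lSemiModType T).

Lemma HomMap0 (f : {linear L -> M}) : HomMap G f (hom0 G L) = hom0 G M.
Proof. by apply: homT_ext => x /=; rewrite raddf0. Qed.

Lemma Ker_HomMap (g : {linear M -> N}) (psi : homT G M) :
  Ker (HomMap G g) psi <->
  forall x, Ker (g : cm_of M -> cm_of N) (proj1_sig psi x).
Proof.
split=> [/(f_equal (fun h => proj1_sig h)) gpsi0 x | gpsi0].
- exact: (f_equal (fun h => h x) gpsi0).
- by apply: homT_ext => x; apply: gpsi0.
Qed.

Variables (f : {linear L -> M}) (inj_f : injective f).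

Lemma HomMap_injective : injective (HomMap G f).
Proof.
move=> p q /(f_equal (fun h => proj1_sig h)) fpq.
by apply: homT_ext => x; apply: inj_f; apply: (f_equal (fun h => h x) fpq).
Qed.

Lemma HomMap_lift (psi : homT G M) :
  (forall x, Im (f : cm_of L -> cm_of M) (proj1_sig psi x)) ->
  Im (HomMap G f) psi.
Proof.
move=> /choice [phi fphi]; case: psi fphi => [psi [psi0 psiD psiZ]] /= fphi.
have phi_lin : is_Tlinear phi.
  split=> [|x y|t x]; apply: inj_f.
  - by rewrite fphi psi0 raddf0.
  - by rewrite fphi psiD -!fphi -raddfD.
  - by rewrite fphi psiZ -fphi -linearZZ.
by exists (exist _ phi phi_lin); apply: homT_ext.
Qed.

Lemma Im_HomMap (psi : homT G M) :
  Im (HomMap G f) psi <->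
  forall x, Im (f : cm_of L -> cm_of M) (proj1_sig psi x).
Proof.
split; last exact: HomMap_lift.
by case=> phi <- x; exists (proj1_sig phi x).
Qed.

Lemma HomMap_exact_zmap : exact3 (zmap (HomT G L)) (HomMap G f).
Proof. exact: injective_exact_zmap HomMap_injective (HomMap0 f). Qed.

Lemma HomMap_i_normal :
  i_normal (f : cm_of L -> cm_of M) -> i_normal (HomMap G f).
Proof.
move=> inf psi; split.
  by apply: Im_sub_cl; [exact: homadd0 | exists (hom0 G L); exact: HomMap0].
case=> [a [a' [/Im_HomMap Ima [/Im_HomMap Ima' psia]]]].
apply/Im_HomMap => x; apply/inf.
exists (proj1_sig a x), (proj1_sig a' x); do 2!split => //.
by rewrite -psia.
Qed.

Lemma HomMap_normal :
  i_normal (f : cm_of L -> cm_of M) -> normal (HomMap G f).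
Proof.
split; last exact: HomMap_i_normal.
exact: injective_k_normal HomMap_injective (HomMap0 f).
Qed.

Lemma HomMap_proper_exact (g : {linear M -> N}) :
  proper_exact3 (f : cm_of L -> cm_of M) (g : cm_of M -> cm_of N) ->
  proper_exact3 (HomMap G f) (HomMap G g).
Proof.
move=> fg psi; rewrite Im_HomMap Ker_HomMap.
by split=> psiP x; apply/fg.
Qed.

End HomFunctor.

Theorem mainTheorem5 (S T : nzSemiRingType) (G : lSemiModType T)
  (ract : G -> S -> G) (HG : right_bisemimod ract)
  (L M N : lSemiModType T) (f : {linear L -> M}) (g : {linear M -> N}) :
  (* (1) *)
  ((exact3 (zmap (cm_of L)) (f : cm_of L -> cm_of M) /\
    normal (f : cm_of L -> cm_of M)) ->
   exact3 (zmap (HomT G L)) (HomMap G f) /\ normal (HomMap G f)) /\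
  (* (2) *)
  ((semi_exact3 (zmap (cm_of L)) (f : cm_of L -> cm_of M) /\
    semi_exact3 (f : cm_of L -> cm_of M) (g : cm_of M -> cm_of N) /\
    normal (f : cm_of L -> cm_of M)) ->
   (proper_exact3 (zmap (HomT G L)) (HomMap G f) /\
    proper_exact3 (HomMap G f) (HomMap G g)) /\ normal (HomMap G f)) /\
  (* (3) *)
  ((exact3 (zmap (cm_of L)) (f : cm_of L -> cm_of M) /\
    exact3 (f : cm_of L -> cm_of M) (g : cm_of M -> cm_of N) /\
    (forall (X Y : lSemiModType T) (h : {linear X -> Y}),
       k_normal (h : cm_of X -> cm_of Y) -> k_normal (HomMap G h))) ->
   exact3 (zmap (HomT G L)) (HomMap G f) /\ exact3 (HomMap G f) (HomMap G g)).
Proof.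
split; [|split].
- move=> [/exact_zmap_injective inj_f [_ inf]].
  by split; [exact: HomMap_exact_zmap | exact: HomMap_normal].
- move=> [ex0 [fg [kf inf]]].
  have inj_f := semi_exact_zmap_injective ex0 kf.
  split; last exact: HomMap_normal.
  split; first exact: (HomMap_exact_zmap G inj_f).2.
  exact/HomMap_proper_exact/i_normal_semi_exact.
- move=> [/exact_zmap_injective inj_f [[kg fg] Hom_k_normal]].
  split; first exact: HomMap_exact_zmap.
  by split; [exact: Hom_k_normal | exact: HomMap_proper_exact].
Qed.
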